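(* Let $\Phi$ be an atomic CSP, $\pi$ an admissible projection scheme with parameter $\eta$ and $\kappa$ as in (A2), $\epsilon\in(0,1/2)$, and assume $\Delta,n\ge c_0$. Consider a run of the algorithm $\mathrm{Main}(\Phi,\pi,\epsilon)$ and fix $1\le t\le T$. The probability that the call to $\mathrm{Sample}$ at time $t$ fails due to (S2) is at most $(\epsilon/\kappa n)^{10}$. Moreover, the probability that $\mathrm{InvSample}$ fails due to (I2) is at most $(\epsilon/\kappa n)^9$.
   Context: CSP notation: $\Phi=(V,(\Omega_v),\mathcal{C})$, $n=|V|$; atomic: each $C$ has a unique violating assignment $\boldsymbol{C}\in\prod_{v\in\mathrm{vbl}(C)}\Omega_v$; degree $\Delta=\max_C|\{C':\mathrm{vbl}(C)\cap\mathrm{vbl}(C')\ne\emptyset\}|$; $\mu_\Phi$ uniform on satisfying assignments. Projection scheme $\pi_v:\Omega_v\to Q_v$; $\mathbb{P}_\pi,\mu_\pi$ pushforwards of the uniform distribution on $\prod_v\Omega_v$ and of $\mu_\Phi$; $\boldsymbol{C}_\pi(v)=\pi_v(\boldsymbol{C}(v))$; $b(C)=\prod_{u\in\mathrm{vbl}(C)}|\pi_u^{-1}(\boldsymbol{C}_\pi(u))|^{-1}$, $b=\max_Cb(C)$; $q_{\mathrm{TV}}=\max_{v,Y}d_{\mathrm{TV}}(\mathbb{P}_\pi[\mathrm{value}(v)=\cdot],\mu_\pi[\mathrm{value}(v)=\cdot\mid Y^{-v}])$; $\overline{\mathrm{vbl}}(C)=\{v\in\mathrm{vbl}(C):|Q_v|>1\}$;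 $\zeta(C)=\max\{1,\max_{v\in\overline{\mathrm{vbl}}(C)}\min(\frac{(1-3b)^\Delta q_{\mathrm{TV}}}{\mathbb{P}_\pi[\mathrm{value}(v)=\boldsymbol{C}_\pi(v)]},2\Delta)\}$. Admissible (parameter $\eta\in(0,1/2)$): (A1) $b\le\eta/(300\Delta)$; (A2) exists $\kappa\ge4\log(3000\Delta)$, $\kappa\le K(\log\Delta+\log\max|Q_v|+\log\max|\mathrm{vbl}(C)|)$, with $|\overline{\mathrm{vbl}}(C)|^2\kappa^2\zeta(C)\prod_{v\in\overline{\mathrm{vbl}}(C)}((1-3b)^{-\Delta}\mathbb{P}_\pi[\mathrm{value}(v)=\boldsymbol{C}_\pi(v)]+e^{-\kappa/3})\le(60000\Delta)^{-2}$ for all $C$; (A3) factor-$2$ comparability of $\mathbb{P}_\pi[\mathrm{value}(v)=\boldsymbol{C}_\pi(v)]$ over constraints $C\ni v$; (A4) $\pi_v$ and fibre sampling in time $K\log|\Omega_v|$. Graph notation: for $Y\in\prod_{v\in V'}Q_v$, $\mathcal{C}(Y)$ = constraints with $Y(v)=\boldsymbol{C}_\pi(v)$ on $\mathrm{vbl}(C)\cap V'$; $H(Y)$ graph on $V$ with $u\ne v$ adjacent iff both lie in $\mathrm{vbl}(C)$ for some $C\in\mathcal{C}(Y)$; $\mathcal{C}(H')=\{C\in\mathcal{C}(Y):\mathrm{vbl}(C)\subseteq H'\}$ for a component $H'$. Constants $c_0,C_0\ge1$ absolute; $L=20\Delta\log(n\kappa/\epsilon)$, $S=10(\kappa n/\epsilon)^\eta\log(n\kappa/\epsilon)$,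 $T=C_0\kappa n\log(n\Delta/\epsilon)$. $\mathrm{Main}$: (M1) $Y_0(v)$ independent uniform in $Q_v$; (M2) for $t=1..T$, pick $v_t$ uniform in $V$, set $Y_t(v_t)=\mathrm{Sample}(Y_{t-1},v_t)$, other coordinates unchanged; (M3) return $\mathrm{InvSample}(Y_T)$. $\mathrm{Sample}(Y,v)$: $H_v$ = component of $v$ in $H(Y^{-v})$. (S1) if $|\mathcal{C}(H_v)|>L$, output a uniform element of $Q_v$. (S2) else, up to $S$ independent attempts draw $X(u)$ uniform in $\pi_u^{-1}(Y(u))$ ($u\in H_v\setminus\{v\}$), $X(v)$ uniform in $\Omega_v$, and output $\pi_v(X(v))$ at the first attempt satisfying all of $\mathcal{C}(H_v)$; if all $S$ attempts fail, output a uniform element of $Q_v$ — this event is ''Sample fails due to (S2)''. $\mathrm{InvSample}(Y)$: (I1) if some component $H'$ of $H(Y)$ has $|\mathcal{C}(H')|>L$, output ERROR. (I2) else for each component $H_j$, up to $S$ attempts draw $X(u)$ uniform in $\pi_u^{-1}(Y(u))$ for $u\in H_j$, keeping the first attempt satisfying all of $\mathcal{C}(H_j)$; if for some $H_j$ all $S$ attempts fail, output ERROR — this is ''InvSample fails due to (I2)''. Otherwise output the assembled $X$. *)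

From HB Require Import structures.
From mathcomp Require Import all_boot all_order all_algebra.
From mathcomp Require Import reals sequences exp.
Set Implicit Arguments. Unset Strict Implicit. Unset Printing Implicit Defensive.
Import Order.TTheory GRing.Theory Num.Theory.
Local Open Scope ring_scope.

Section Dist.
Variable R : realType.
Definition dist (T : finType) := {ffun T -> R}.
Definition dret (T : finType) (x : T) : dist T := [ffun y => (y == x)%:R].
Definition dbind (A B : finType) (d : dist A) (f : A -> dist B) : dist B :=
  [ffun b => \sum_(a : A) d a * f a b].
Definition unif (T : finType) (A : {set T}) : dist T :=
  [ffun x => if x \in A then #|A|%:R^-1 else 0].
Definition dprob (T : finType) (d : dist T) (E : pred T) : R :=
  \sum_(x : T | E x) d x.
End Dist.

(*  - variables V = 'I_n ; all domains are subsets Dom v of a common finite *)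
(*    type Om (Omega_v := Dom v) ;                                           *)
(*  - projection pi v : Om -> Q, with Q_v := pi v @: Dom v ;                 *)
(*  - constraints indexed by 'I_m ; constraint C has variable set vbl C and  *)
(*    unique violating assignment bad C (restricted to vbl C).               *)
Section CSP.
Variables (R : realType) (n m : nat) (Om Q : finType).
Variables (Dom : 'I_n -> {set Om}) (pi : 'I_n -> Om -> Q).
Variables (vbl : 'I_m -> {set 'I_n}) (bad : 'I_m -> 'I_n -> Om).

Definition Qv (v : 'I_n) : {set Q} := pi v @: Dom v.
Definition fibre (v : 'I_n) (q : Q) : {set Om} := [set x in Dom v | pi v x == q].
Definition Ppi (v : 'I_n) (q : Q) : R := #|fibre v q|%:R / #|Dom v|%:R.
Definition Cpi (C : 'I_m) (u : 'I_n) : Q := pi u (bad C u).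

Definition bC (C : 'I_m) : R := \prod_(u in vbl C) (#|fibre u (Cpi C u)|%:R)^-1.
Definition bmax : R := \big[Num.max/0]_(C : 'I_m) bC C.

Definition Delta : nat :=
  \max_(C : 'I_m) #|[set C' : 'I_m | ~~ [disjoint vbl C & vbl C']]|.

Definition assignment := {ffun 'I_n -> Om}.
Definition violated (C : 'I_m) (X : assignment) : bool :=
  [forall u in vbl C, X u == bad C u].
Definition SatSet : {set assignment} :=
  [set X : assignment | [forall u, X u \in Dom u] && [forall C, ~~ violated C X]].

Definition qassign := {ffun 'I_n -> Q}.
Definition cond (v : 'I_n) (Y : qassign) : {set assignment} :=
  [set X in SatSet | [forall u, (u != v) ==> (pi u (X u) == Y u)]].
Definition mu_cond (v : 'I_n) (Y : qassign) (q : Q) : R :=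
  #|[set X in cond v Y | pi v (X v) == q]|%:R / #|cond v Y|%:R.
Definition dTV (v : 'I_n) (Y : qassign) : R :=
  2^-1 * \sum_(q : Q) `|Ppi v q - mu_cond v Y q|.
(* max over v and over Y^{-v} in the support of mu_pi *)
Definition qTV : R :=
  \big[Num.max/0]_(v : 'I_n) \big[Num.max/0]_(Y : qassign | (0 < #|cond v Y|)%N)
     dTV v Y.

Definition vbar (C : 'I_m) : {set 'I_n} := [set u in vbl C | (1 < #|Qv u|)%N].

Definition zeta (C : 'I_m) : R :=
  Num.max 1 (\big[Num.max/0]_(u in vbar C)
     Num.min ((1 - 3 * bmax) ^+ Delta * qTV / Ppi u (Cpi C u)) (2 * Delta%:R)).

Definition maxQ : nat := \max_(v : 'I_n) #|Qv v|.
Definition maxvbl : nat := \max_(C : 'I_m) #|vbl C|.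

Definition A1 (eta : R) : Prop := bmax <= eta / (300 * Delta%:R).
Definition A2 (K kappa : R) : Prop :=
  [/\ 4 * ln (3 * 10 ^+ 3 * Delta%:R) <= kappa,
      kappa <= K * (ln Delta%:R + ln maxQ%:R + ln maxvbl%:R) &
      forall C : 'I_m,
        (#|vbar C|%:R) ^+ 2 * kappa ^+ 2 * zeta C *
          \prod_(u in vbar C)
             ((1 - 3 * bmax) ^- Delta * Ppi u (Cpi C u) + expR (- kappa / 3))
        <= (6 * 10 ^+ 4 * Delta%:R) ^- 2].
Definition A3 : Prop :=
  forall (v : 'I_n) (C C' : 'I_m), v \in vbl C -> v \in vbl C' ->
    Ppi v (Cpi C v) <= 2 * Ppi v (Cpi C' v).

(* C(Y) for Y defined on V' (values of Y outside V' are ignored) *)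
Definition CofY (V' : {set 'I_n}) (Y : qassign) : {set 'I_m} :=
  [set C | [forall u in vbl C :&: V', Y u == Cpi C u]].
Definition adjH (V' : {set 'I_n}) (Y : qassign) : rel 'I_n :=
  fun u w => (u != w) && [exists C in CofY V' Y, (u \in vbl C) && (w \in vbl C)].
Definition compH (V' : {set 'I_n}) (Y : qassign) (v : 'I_n) : {set 'I_n} :=
  [set u | connect (adjH V' Y) v u].
Definition CofH (V' : {set 'I_n}) (Y : qassign) (H : {set 'I_n}) : {set 'I_m} :=
  [set C in CofY V' Y | vbl C \subset H].

Definition satC (Cs : {set 'I_m}) (X : assignment) : bool :=
  [forall C in Cs, ~~ violated C X].

(* uniform product distribution: X u uniform in F u independently *)
Definition prodset (F : 'I_n -> {set Om}) : {set assignment} :=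
  [set X : assignment | [forall u, X u \in F u]].

Fixpoint attempts (k : nat) (draw : dist R assignment) (ok : pred assignment)
  : dist R (option assignment) :=
  match k with
  | 0 => dret R (None : option assignment)
  | k'.+1 => dbind draw (fun X => if ok X then dret R (Some X)
                                  else attempts k' draw ok)
  end.

Variables (kappa eps eta C0 : R).

Definition Lpar : R := 20 * Delta%:R * ln (n%:R * kappa / eps).
Definition Spar : R := 10 * (kappa * n%:R / eps) `^ eta * ln (n%:R * kappa / eps).
Definition Tpar : R := C0 * kappa * n%:R * ln (n%:R * Delta%:R / eps).
(* "up to S attempts" and "t = 1..T" with real S, T *)
Definition Snat : nat := Num.truncn Spar.
Definition Tnat : nat := Num.truncn Tpar.

(* Sample(Y, v): output value in Q together with the flag
   "Sample fails due to (S2)". *)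
Definition Sample (Y : qassign) (v : 'I_n) : dist R (Q * bool)%type :=
  let V' := [set: 'I_n] :\ v in
  let Hv := compH V' Y v in
  let CH := CofH V' Y Hv in
  if Lpar < #|CH|%:R then
    dbind (unif R (Qv v)) (fun q => dret R (q, false))
  else
    dbind (attempts Snat
             (unif R (prodset (fun u => if u == v then Dom u
                                      else if u \in Hv then fibre u (Y u)
                                      else Dom u)))
             (satC CH))
      (fun o => match o with
                | Some X => dret R (pi v (X v), false)
                | None => dbind (unif R (Qv v)) (fun q => dret R (q, true))
                end).

Definition step (Y : qassign) : dist R (qassign * bool)%type :=
  dbind (unif R [set: 'I_n]) (fun v =>
    dbind (Sample Y v) (fun p =>
      dret R ([ffun u => if u == v then p.1 else Y u], p.2))).

Fixpoint Ydist (t : nat) : dist R qassign :=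
  match t with
  | 0 => unif R [set Y : qassign | [forall u, Y u \in Qv u]]
  | t'.+1 => dbind (Ydist t') (fun Y => dbind (step Y) (fun p => dret R p.1))
  end.

Definition failS (t : nat) : R :=
  dprob (dbind (Ydist t.-1) step) (fun p => p.2).

(* InvSample: outcome None = ERROR by (I1), Some None = ERROR by (I2),
   Some (Some X) = output X (all coordinates are defined, i.e. Some _). *)
Definition comps (Y : qassign) : {set {set 'I_n}} :=
  [set compH [set: 'I_n] Y u | u in [set: 'I_n]].

Fixpoint inv_loop (Y : qassign) (l : seq {set 'I_n}) (acc : {ffun 'I_n -> option Om})
  : dist R (option {ffun 'I_n -> option Om}) :=
  match l with
  | [::] => dret R (Some acc)
  | H :: l' =>
      dbind (attempts Snat
               (unif R (prodset (fun u => if u \in H then fibre u (Y u) else Dom u)))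
               (satC (CofH [set: 'I_n] Y H)))
        (fun o => match o with
                  | None => dret R None
                  | Some X => inv_loop Y l' [ffun u => if u \in H then Some (X u)
                                                      else acc u]
                  end)
  end.

Definition InvSample (Y : qassign)
  : dist R (option (option {ffun 'I_n -> option Om})) :=
  if [exists H in comps Y, Lpar < #|CofH [set: 'I_n] Y H|%:R] then dret R None
  else dbind (inv_loop Y (enum (comps Y)) [ffun => None]) (fun o => dret R (Some o)).

Definition failI : R :=
  dprob (dbind (Ydist Tnat) InvSample) (fun o => o == Some None).

End CSP.

From HB Require Import structures.
From mathcomp Require Import all_boot all_order all_algebra.
From mathcomp Require Import reals sequences exp.
From mathcomp Require Import lra ring.
Import Order.TTheory GRing.Theory Num.Theory.
Set Implicit Arguments. Unset Strict Implicit. Unset Printing Implicit Defensive.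
Local Open Scope ring_scope.

(* Every attempt in (S2) or (I2) draws a uniform point of a product space and
   succeeds iff the point satisfies a set of at most L constraints, each of
   which is violated with probability at most b and shares variables with at
   most Delta others.  Since b Delta <= eta/300, the counting form of the
   Lovasz local lemma with x = 2b shows that one attempt fails with
   probability at most 1 - (1 - 2b)^L.  For N = n kappa / eps, L = 20 Delta ln N
   and S = 10 N^eta ln N, all S attempts then fail with probability at most
   N^-10.  InvSample runs at most n such loops, and n <= N. *)

Section ProductLLL.
Variables (R : realType) (n m : nat) (Om : finType) (F : 'I_n -> {set Om}).
Variables (vbl : 'I_m -> {set 'I_n}) (bad : 'I_m -> 'I_n -> Om).
Implicit Types (S T A U : {set 'I_m}) (C D : 'I_m).

Definition nsat (S : {set 'I_m}) : nat :=
  #|[set X in prodset F | satC vbl bad S X]|.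

Definition nviol (C : 'I_m) (S : {set 'I_m}) : nat :=
  #|[set X in prodset F | violated vbl bad C X && satC vbl bad S X]|.

Lemma nsat_set0 : nsat set0 = #|prodset F|.
Proof.
apply: eq_card => X; rewrite inE andb_idr // => _.
by apply/forall_inP => C; rewrite inE.
Qed.

Lemma satC_setU1 C S X :
  satC vbl bad (C |: S) X = ~~ violated vbl bad C X && satC vbl bad S X.
Proof.
apply/forall_inP/andP => [H|[HC /forall_inP HS] D].
  split; first by apply: H; rewrite setU11.
  by apply/forall_inP => D HD; apply: H; rewrite setU1r.
by rewrite in_setU1 => /predU1P[->|/HS].
Qed.

Lemma nsat_setU1 C S : nsat S = (nsat (C |: S) + nviol C S)%N.
Proof.
rewrite /nsat /nviol -(cardsID [set X | violated vbl bad C X]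
  [set X in prodset F | satC vbl bad S X]) addnC.
congr (_ + _)%N; apply: eq_card => X; rewrite !inE ?satC_setU1.
all: by case: (violated vbl bad C X); case: (satC vbl bad S X); rewrite ?andbF ?andbT.
Qed.

Lemma nviol_subset C S T : T \subset S -> (nviol C S <= nviol C T)%N.
Proof.
move=> sTS; apply/subset_leq_card/subsetP => X; rewrite !inE.
case/and3P=> -> -> /forall_inP HS; apply/forall_inP => D HD.
exact/HS/(subsetP sTS).
Qed.

Lemma card_prodset_fixed_off (W : {set 'I_n}) (X0 : assignment n Om) :
  #|[set Z : assignment n Om |
      [forall u, if u \in W then Z u \in F u else Z u == X0 u]]|
  = (\prod_(u in W) #|F u|)%N.
Proof.
have -> : [set Z : assignment n Om |
      [forall u, if u \in W then Z u \in F u else Z u == X0 u]]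
   = [set Z in family (fun u => if u \in W then mem (F u) else mem (pred1 (X0 u)))].
  apply/setP => Z; rewrite !inE.
  by apply/forallP/familyP => H u; have := H u; case: (u \in W).
rewrite cardsE card_family foldrE big_map big_enum /=.
rewrite (bigID (mem W)) /= [X in (_ * X)%N]big1 ?muln1.
  by apply: eq_bigr => u ->.
by move=> u /negbTE ->; rewrite card1.
Qed.

(* Overwriting the variables of C injects (C-violating solutions of S) x
   (all values on vbl C) into the solutions of S, as S does not touch vbl C. *)
Lemma nviol_mul_le C S : (forall D, D \in S -> [disjoint vbl D & vbl C]) ->
  (nviol C S * \prod_(u in vbl C) #|F u| <= nsat S)%N.
Proof.
move=> disS.
rewrite /nviol; set V := [set X in prodset F | _ && _].
have [->|/set0Pn [X0 _]] := eqVneq V set0; first by rewrite cards0.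
rewrite -(card_prodset_fixed_off (vbl C) X0) -cardsX.
pose glue (p : assignment n Om * assignment n Om) : assignment n Om :=
  [ffun u => if u \in vbl C then p.2 u else p.1 u].
rewrite -(@card_in_imset _ _ glue); last first.
  move=> [X Z] [X' Z']; rewrite !in_setX !inE /violated /=.
  case/andP=> /and3P[_ /forall_inP vX _] /forallP HZ.
  case/andP=> /and3P[_ /forall_inP vX' _] /forallP HZ' E.
  congr pair; apply/ffunP => u;
    have := congr1 (fun f : assignment n Om => f u) E; rewrite /glue !ffunE /=.
  - case Hu: (u \in vbl C) => // _.
    by rewrite (eqP (vX u Hu)) (eqP (vX' u Hu)).
  - by have := HZ u; have := HZ' u; case: (u \in vbl C) => // /eqP-> /eqP->.
apply/subset_leq_card/subsetP => Y /imsetP [[X Z]].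
rewrite !inE /= => /andP[/and3P[/forallP HX _ /forall_inP HS] /forallP HZ] ->.
apply/andP; split.
  apply/forallP => u; rewrite ffunE.
  by have := HZ u; have := HX u; case: (u \in vbl C).
apply/forall_inP => D HD; apply: contra (HS D HD) => /forall_inP vD.
apply/forall_inP => u Hu; have := vD u Hu.
by rewrite ffunE (disjointFr (disS D HD) Hu).
Qed.

Definition weight (C : 'I_m) : R := \prod_(u in vbl C) (#|F u|%:R)^-1.

Lemma nviol_le_weight C S : (forall D, D \in S -> [disjoint vbl D & vbl C]) ->
  (nviol C S)%:R <= weight C * (nsat S)%:R.
Proof.
move=> disS; have Hle := nviol_mul_le disS.
have [->|] := posnP (nviol C S).
  by rewrite mulr_ge0 // prodr_ge0 // => u _; rewrite invr_ge0.
rewrite card_gt0 => /set0Pn [X]; rewrite !inE => /andP[/forallP HX _].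
have Fpos : (0 < \prod_(u in vbl C) #|F u|)%N.
  by apply: prodn_gt0 => u; apply/card_gt0P; exists (X u).
rewrite /weight prodfV -natr_prod mulrC ler_pdivlMr ?ltr0n //.
by rewrite -natrM ler_nat.
Qed.

Variables (x b : R) (Dg : nat) (S0 : {set 'I_m}).
Hypotheses (x_ge0 : 0 <= x) (x_le1 : x <= 1) (b_le : b <= x * (1 - x) ^+ Dg).
Hypothesis weight_le : forall C, C \in S0 -> weight C <= b.
Hypothesis degree_le :
  forall C, (#|[set C' | ~~ [disjoint vbl C & vbl C']]| <= Dg)%N.

Lemma nsat_setU1_ge D U : (nviol D U)%:R <= x * (nsat U)%:R ->
  (1 - x) * (nsat U)%:R <= (nsat (D |: U))%:R.
Proof. by rewrite (nsat_setU1 D U) natrD => ?; lra. Qed.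

Lemma nsat_setU_ge A T : [disjoint A & T] ->
  (forall D U, D \in T -> U \subset (A :|: T) :\ D ->
     (nviol D U)%:R <= x * (nsat U)%:R) ->
  (1 - x) ^+ #|T| * (nsat A)%:R <= (nsat (A :|: T))%:R.
Proof.
have [k] := ubnP #|T|; elim: k T => // k IHk T /ltnSE leTk disAT HT.
have [->|/set0Pn [D TD]] := eqVneq T set0; first by rewrite cards0 mul1r setU0.
set T' := T :\ D.
have sT'T : T' \subset T by apply: subsetDl.
have cardT : #|T| = #|T'|.+1 by rewrite (cardsD1 D T) TD.
have IH : (1 - x) ^+ #|T'| * (nsat A)%:R <= (nsat (A :|: T'))%:R.
  apply: IHk; first by rewrite -ltnS -cardT.
    exact: disjointWr disAT.
  move=> D' U /(subsetP sT'T) TD' sU; apply: HT TD' (subset_trans sU _).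
  exact/setSD/setUS.
have sU : A :|: T' \subset (A :|: T) :\ D.
  apply/subsetP => y; rewrite !inE => /orP[Ay|/andP[-> ->]]; last by rewrite orbT.
  by rewrite Ay andbT; apply: contraTneq Ay => ->; rewrite (disjointFl disAT TD).
have -> : A :|: T = D |: (A :|: T') by rewrite setUCA setD1K // setUC.
rewrite cardT exprS -mulrA.
apply: le_trans (nsat_setU1_ge (HT _ _ TD sU)).
by apply: ler_wpM2l IH; rewrite subr_ge0.
Qed.

(* Dropping the
   constraints of S that meet C leaves a violation probability of at most
   weight C <= b, while by induction those at most Dg constraints cut the
   number of solutions by a factor of at most (1 - x)^Dg. *)
Lemma nviol_le S C : S \subset S0 -> C \in S0 ->
  (nviol C S)%:R <= x * (nsat S)%:R.
Proof.
have [k] := ubnP #|S|; elim: k S C => // k IHk S C /ltnSE leSk sS0 S0C.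
set Nb := [set C' | ~~ [disjoint vbl C & vbl C']].
have dis_far_near : [disjoint S :\: Nb & S :&: Nb].
  rewrite disjoints_subset; apply/subsetP => y.
  by rewrite !inE => /andP[/negPf->]; rewrite andbF.
have nsatS := nsat_setU_ge dis_far_near.
rewrite setUC setID in nsatS.
have {}nsatS : (1 - x) ^+ #|S :&: Nb| * (nsat (S :\: Nb))%:R <= (nsat S)%:R.
  apply: nsatS => D U /setIP[SD _] sU; apply: IHk.
  - apply: leq_trans leSk; apply: leq_ltn_trans (subset_leq_card sU) _.
    by rewrite (cardsD1 D S) SD.
  - by apply: subset_trans sU (subset_trans (subsetDl _ _) sS0).
  - exact: (subsetP sS0).
have xpow : x * (1 - x) ^+ Dg <= x * (1 - x) ^+ #|S :&: Nb|.
  apply: ler_wpM2l => //.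
  apply: ler_wiXn2l; rewrite ?subr_ge0 ?lerBlDr ?lerDl //.
  exact: leq_trans (subset_leq_card (subsetIr S Nb)) (degree_le C).
have viol_far : (nviol C (S :\: Nb))%:R <= weight C * (nsat (S :\: Nb))%:R.
  by apply: nviol_le_weight => D; rewrite !inE negbK disjoint_sym => /andP[].
apply: le_trans (_ : weight C * (nsat (S :\: Nb))%:R <= _).
  by apply: le_trans viol_far; rewrite ler_nat nviol_subset // subsetDl.
apply: le_trans (_ : x * ((1 - x) ^+ #|S :&: Nb| * (nsat (S :\: Nb))%:R) <= _).
  by rewrite mulrA ler_wpM2r // (le_trans (weight_le S0C)) // (le_trans b_le).
exact: ler_wpM2l.
Qed.

Lemma nsat_ge S : S \subset S0 ->
  (1 - x) ^+ #|S| * #|prodset F|%:R <= (nsat S)%:R.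
Proof.
move=> sS0; have := @nsat_setU_ge set0 S; rewrite set0U nsat_set0.
apply; first by rewrite -setI_eq0 set0I.
move=> D U SD sU; apply: nviol_le; last exact: (subsetP sS0).
exact: subset_trans sU (subset_trans (subsetDl _ _) sS0).
Qed.

End ProductLLL.

Section SubProbability.
Variable R : realType.
Implicit Types (A B T : finType).

Definition subprob T (d : dist R T) : Prop :=
  (forall x, 0 <= d x) /\ \sum_x d x <= 1.

Lemma subprob_dret T (x : T) : subprob (dret R x).
Proof.
split=> [y|]; first by rewrite ffunE ler0n.
rewrite (bigD1 x) //= big1 ?addr0 ?ffunE ?eqxx // => y /negbTE yx.
by rewrite ffunE yx.
Qed.

Lemma subprob_unif T (S : {set T}) : subprob (unif R S).
Proof.
split=> [y|]; first by rewrite ffunE; case: ifP; rewrite ?invr_ge0.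
rewrite (bigID (mem S)) /= [X in _ + X]big1 ?addr0; last first.
  by move=> y /negbTE Sy; rewrite ffunE Sy.
rewrite (eq_bigr (fun _ => #|S|%:R^-1)); last by move=> y Sy; rewrite ffunE Sy.
rewrite sumr_const.
have [->|S0] := eqVneq #|S| 0%N; first by rewrite mulr0n ler01.
by rewrite -[_ *+ _]mulr_natr mulVf // pnatr_eq0.
Qed.

Lemma subprob_dbind A B (d : dist R A) (f : A -> dist R B) :
  subprob d -> (forall a, subprob (f a)) -> subprob (dbind d f).
Proof.
move=> [d0 d1] Hf; split=> [y|].
  by rewrite ffunE sumr_ge0 // => a _; rewrite mulr_ge0 //; case: (Hf a).
under eq_bigr => y _ do rewrite ffunE.
rewrite exchange_big /=; apply: le_trans d1; apply: ler_sum => a _.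
by rewrite -mulr_sumr ler_piMr //; case: (Hf a).
Qed.

Lemma subprob_attempts n (Om : finType) k (draw : dist R (assignment n Om)) ok :
  subprob draw -> subprob (attempts k draw ok).
Proof.
move=> Hd; elim: k => [|k IHk] /=; first exact: subprob_dret.
by apply: subprob_dbind => // X; case: (ok X) => //; apply: subprob_dret.
Qed.

Lemma dprob_dret T (x : T) (E : pred T) : dprob (dret R x) E = (E x)%:R.
Proof.
rewrite /dprob; case Ex: (E x).
  rewrite (bigD1 x) //= big1 ?ffunE ?eqxx ?addr0 // => y /andP[_ /negbTE yx].
  by rewrite ffunE yx.
rewrite big1 // => y Ey; rewrite ffunE; case: eqP => // yx.
by rewrite -yx Ey in Ex.
Qed.

Lemma dprob_dbind A B (d : dist R A) (f : A -> dist R B) E :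
  dprob (dbind d f) E = \sum_a d a * dprob (f a) E.
Proof.
rewrite /dprob; under eq_bigr => y _ do rewrite ffunE.
by rewrite exchange_big /=; apply: eq_bigr => a _; rewrite mulr_sumr.
Qed.

Lemma dprob_dbind_dret A B (d : dist R A) (g : A -> B) (E : pred B) :
  dprob (dbind d (fun a => dret R (g a))) E = dprob d (fun a => E (g a)).
Proof.
rewrite dprob_dbind; under eq_bigr => a _ do rewrite dprob_dret.
rewrite /dprob [RHS]big_mkcond /=; apply: eq_bigr => a _.
by case: (E (g a)); rewrite ?mulr1 ?mulr0.
Qed.

Lemma dprob_le1 T (d : dist R T) E : subprob d -> dprob d E <= 1.
Proof.
case=> d0 d1; apply: le_trans d1; rewrite /dprob [X in _ <= X](bigID E) /=.
by rewrite lerDl sumr_ge0.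
Qed.

Lemma dprob_dbind_le A B (d : dist R A) (f : A -> dist R B) E (h : A -> R) :
  (forall a, 0 <= d a) -> (forall a, dprob (f a) E <= h a) ->
  dprob (dbind d f) E <= \sum_a d a * h a.
Proof. by move=> d0 Hh; rewrite dprob_dbind ler_sum // => a _; rewrite ler_wpM2l. Qed.

Lemma dprob_dbind_le_const A B (d : dist R A) (f : A -> dist R B) E (c : R) :
  subprob d -> 0 <= c -> (forall a, dprob (f a) E <= c) -> dprob (dbind d f) E <= c.
Proof.
move=> [d0 d1] c0 Hc; apply: le_trans (dprob_dbind_le d0 Hc) _.
by rewrite -mulr_suml ler_piMl.
Qed.

Lemma dprob_dbind_option_le A B (d : dist R (option A)) (f : option A -> dist R B)
    E (c : R) :
  subprob d -> 0 <= c -> dprob (f None) E <= 1 ->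
  (forall a, dprob (f (Some a)) E <= c) ->
  dprob (dbind d f) E <= d None + c.
Proof.
move=> [d0 d1] c0 fN fS.
apply: le_trans (dprob_dbind_le (h := fun o => if o is None then 1 else c) d0 _) _.
  by case.
rewrite (bigD1 None) //= mulr1 lerD2l (eq_bigr (fun o => d o * c)); last by case.
have sum_le : \sum_(o | o != None) d o * c <= \sum_o d o * c.
  by rewrite [X in _ <= X](bigD1 None) //= lerDr mulr_ge0.
by apply: le_trans sum_le _; rewrite -mulr_suml ler_piMl.
Qed.

Lemma attempts_None n (Om : finType) k (draw : dist R (assignment n Om)) ok :
  attempts k draw ok None = (\sum_X draw X * (~~ ok X)%:R) ^+ k.
Proof.
elim: k => [|k IHk] /=; first by rewrite ffunE expr0.
rewrite ffunE exprS mulr_suml; apply: eq_bigr => X _.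
by case: (ok X); rewrite /= ?ffunE ?mulr0 ?mul0r ?mulr1 // IHk.
Qed.

End SubProbability.

Section RetryFailure.
Variables (R : realType) (n m : nat) (Om : finType) (F : 'I_n -> {set Om}).
Variables (vbl : 'I_m -> {set 'I_n}) (bad : 'I_m -> 'I_n -> Om).

Lemma unif_unsatE (S : {set 'I_m}) :
  \sum_X unif R (prodset F) X * (~~ satC vbl bad S X)%:R =
  (#|prodset F| - nsat F vbl bad S)%:R / #|prodset F|%:R.
Proof.
have -> : (#|prodset F| - nsat F vbl bad S)%N =
    #|[set X in prodset F | ~~ satC vbl bad S X]|.
  rewrite -(cardsID [set X | satC vbl bad S X] (prodset F)) /nsat.
  rewrite (_ : [set X in _ | _] = prodset F :&: [set X | satC vbl bad S X]).
    by rewrite addKn; apply: eq_card => X; rewrite !inE andbC.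
  by apply/setP => X; rewrite !inE.
rewrite mulr_natl -sumr_const [RHS]big_mkcond /=; apply: eq_bigr => X _.
rewrite ffunE !inE; case: [forall u, X u \in F u]; case: (satC vbl bad S X).
all: by rewrite ?mulr0 ?mul0r ?mulr1.
Qed.

Lemma attempts_fail_le k (x b : R) (Dg : nat) (S : {set 'I_m}) :
  0 <= x -> x <= 1 -> b <= x * (1 - x) ^+ Dg ->
  (forall C, C \in S -> weight R F vbl C <= b) ->
  (forall C, (#|[set C' | ~~ [disjoint vbl C & vbl C']]| <= Dg)%N) ->
  attempts k (unif R (prodset F)) (satC vbl bad S) None
    <= (1 - (1 - x) ^+ #|S|) ^+ k.
Proof.
move=> x0 x1 bx wS degS.
have lll := nsat_ge bad x0 x1 bx wS degS (subxx S).
have pow_le1 : (1 - x) ^+ #|S| <= 1 by rewrite exprn_ile1 // ?subr_ge0 // lerBlDr lerDl.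
rewrite attempts_None unif_unsatE; apply: lerXn2r; rewrite ?nnegrE ?subr_ge0 //.
  by rewrite divr_ge0.
have [->|Fpos] := posnP #|prodset F|; first by rewrite invr0 mulr0 subr_ge0.
rewrite natrB; last by apply/subset_leq_card/subsetP => X; rewrite inE => /andP[].
by rewrite ler_pdivrMr ?ltr0n // mulrBl mul1r lerB.
Qed.

End RetryFailure.

Section Estimates.
Variable R : realType.

Lemma bernoulli_le (y : R) (s : nat) : 0 <= y <= 1 -> 1 - s%:R * y <= (1 - y) ^+ s.
Proof.
move=> /andP[y0 y1]; elim: s => [|s IH]; first by rewrite expr0 mul0r subr0.
rewrite exprS -natr1.
have : (1 - y) * (1 - s%:R * y) <= (1 - y) * (1 - y) ^+ s by rewrite ler_wpM2l ?subr_ge0.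
have : 0 <= s%:R * y * y by rewrite !mulr_ge0.
nra.
Qed.

Lemma expRN_le_subr (y : R) : 0 <= y <= 2^-1 -> expR (- (2 * y)) <= 1 - y.
Proof.
move=> /andP[y0 y1].
have := expR_ge1Dx (2 * y); have := expR_gt0 (- (2 * y)).
have : expR (- (2 * y)) * expR (2 * y) = 1 by rewrite -expRD addNr expR0.
set u := expR _; set w := expR _ => uw u0 w_ge.
nra.
Qed.

Lemma exprn_le_expRN (q c : R) (k : nat) :
  0 <= q -> q <= expR (- c) -> q ^+ k <= expR (- (c * k%:R)).
Proof.
move=> q0 qc; rewrite -mulNr expRM_natr.
by apply: lerXn2r; rewrite ?nnegrE ?expR_ge0.
Qed.

Lemma half_le_expRNhalf : 2^-1 <= expR (- 2^-1) :> R.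
Proof. by have := expR_ge1Dx (- 2^-1 : R); lra. Qed.

Lemma ln_ge1 (x : R) : 4 <= x -> 1 <= ln x.
Proof.
move=> x4; rewrite -[1]expRK ler_ln ?posrE ?expR_gt0 //; last lra.
have e1 : expR (-1) = expR (- 2^-1) ^+ 2 :> R by rewrite -expRM_natl; congr expR; lra.
have : (2^-1) ^+ 2 <= expR (-1) :> R.
  rewrite e1; apply: lerXn2r;
  by rewrite ?nnegrE ?expR_ge0 ?half_le_expRNhalf ?invr_ge0 ?ler0n.
rewrite expRN => le4.
apply: le_trans x4.
rewrite -[expR 1]invrK -[4]invrK lef_pV2 ?posrE ?invr_gt0 ?expR_gt0 //; lra.
Qed.

Lemma expRN2_ge : 16^-1 <= expR (-2) :> R.
Proof.
have -> : expR (-2) = expR (- 2^-1) ^+ 4 :> R by rewrite -expRM_natl; congr expR; lra.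
apply: le_trans (_ : (2^-1) ^+ 4 <= _); first lra.
by apply: lerXn2r; rewrite ?nnegrE ?expR_ge0 ?half_le_expRNhalf ?invr_ge0 ?ler0n.
Qed.

Lemma lll_weight_condition (b eta : R) (D : nat) :
  0 <= b -> 1 <= D%:R :> R -> b * D%:R <= eta / 300 -> eta < 2^-1 ->
  [/\ 0 <= 2 * b, 2 * b <= 1 & b <= 2 * b * (1 - 2 * b) ^+ D].
Proof.
move=> b0 D1 bD eta1.
have b_le_bD : b <= b * D%:R by rewrite ler_peMr.
have b2 : 0 <= 2 * b <= 1 by apply/andP; split; lra.
have half_le : 2^-1 <= (1 - 2 * b) ^+ D by have := bernoulli_le D b2; lra.
have : b * 1 <= b * (2 * (1 - 2 * b) ^+ D) by rewrite ler_wpM2l //; lra.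
by split; lra.
Qed.

Lemma retry_fail_le (b eta D l : R) (s k : nat) :
  0 <= b -> 1 <= D -> b * D <= eta / 300 -> 0 < eta -> eta < 2^-1 -> 1 <= l ->
  s%:R <= 20 * D * l -> 10 * expR (eta * l) * l < k%:R + 1 ->
  (1 - (1 - 2 * b) ^+ s) ^+ k <= expR (- (10 * l)).
Proof.
move=> b0 D1 bD eta0 eta1 l1 s_le k_gt.
have b_le_bD : b <= b * D by rewrite ler_peMr.
have b_small : b <= 600^-1 by lra.
set q := 1 - _.
have qE : q = 1 - (1 - 2 * b) ^+ s by [].
have q0 : 0 <= q by rewrite subr_ge0 exprn_ile1 //; lra.
set t := eta * l in k_gt.
have t_gt0 : 0 < t by rewrite mulr_gt0 //; lra.
have bs_le : 2 * b * s%:R <= 2 / 15 * t.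
  have : b * s%:R <= b * (20 * D * l) by rewrite ler_wpM2l.
  have : b * D * l <= eta / 300 * l by rewrite ler_wpM2r //; lra.
  rewrite /t; lra.
have l_le : l <= expR t * l by rewrite ler_peMl //; [lra | have := expR_ge1Dx t; lra].
have [t_small|t_large] := lerP t 5^-1.
  have q_small : q <= expR (-2).
    have := @bernoulli_le (2 * b) s; have := expRN2_ge; lra.
  apply: le_trans (exprn_le_expRN k q0 q_small) _; rewrite ler_expR; lra.
set z := expR (- (4 / 15 * t)).
have z_le : z <= (1 - 2 * b) ^+ s.
  apply: le_trans (_ : expR (- (2 * (2 * b))) ^+ s <= _).
    by rewrite -expRM_natr ler_expR; lra.
  apply: lerXn2r; rewrite ?nnegrE ?expR_ge0 ?subr_ge0 ?expRN_le_subr //; lra.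
have q_le_z : q <= expR (- z) by have := expR_ge1Dx (- z); lra.
apply: le_trans (exprn_le_expRN k q0 q_le_z) _; rewrite ler_expR.
have z_gt0 : 0 < z := expR_gt0 _.
have z_le1 : z <= 1 by rewrite expR_le1; lra.
have zk : z * (10 * expR t * l) < z * (k%:R + 1) by rewrite ltr_pM2l.
have zE : z * (10 * expR t * l) = 10 * (expR (11 / 15 * t) * l).
  have <- : z * expR t = expR (11 / 15 * t) by rewrite /z -expRD; congr expR; field.
  by ring.
rewrite zE in zk.
have : (1 + 11 / 15 * t) * l <= expR (11 / 15 * t) * l.
  by rewrite ler_wpM2r ?expR_ge1Dx //; lra.
have : 5^-1 * l <= t * l by rewrite ler_wpM2r //; lra.
lra.
Qed.

Lemma ge8_mul_div (a k e : R) : 1 <= a -> 4 <= k -> 0 < e -> e < 2^-1 -> 8 <= a * k / e.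
Proof.
move=> a1 k4 e0 e1; rewrite ler_pdivlMr //.
have : 1 * k <= a * k by rewrite ler_wpM2r //; lra.
lra.
Qed.

Lemma mul_exprS_le (a k e : R) (j : nat) : 1 <= a -> 4 <= k -> 0 < e -> e < 2^-1 ->
  a * (e / (k * a)) ^+ j.+1 <= (e / (k * a)) ^+ j.
Proof.
move=> a1 k4 e0 e1.
have r0 : 0 <= e / (k * a) by rewrite divr_ge0 ?mulr_ge0 //; lra.
have -> : a * (e / (k * a)) ^+ j.+1 = e / k * (e / (k * a)) ^+ j.
  by rewrite exprS mulrA; congr (_ * _); field; apply/andP; split; rewrite gt_eqF //; lra.
by rewrite -[X in _ <= X]mul1r ler_wpM2r ?exprn_ge0 // ler_pdivrMr; lra.
Qed.

End Estimates.

Section Algorithm.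
Variables (R : realType) (n m : nat) (Om Q : finType).
Variables (Dom : 'I_n -> {set Om}) (pi : 'I_n -> Om -> Q).
Variables (vbl : 'I_m -> {set 'I_n}) (bad : 'I_m -> 'I_n -> Om).
Variables (eta kappa eps : R).
Hypothesis bad_in_Dom : forall C u, u \in vbl C -> bad C u \in Dom u.
Hypotheses (eta_gt0 : 0 < eta) (eta_lt : eta < 2^-1) (A1_eta : A1 Dom pi vbl bad eta).
Hypotheses (kappa_ge4 : 4 <= kappa) (eps_gt0 : 0 < eps) (eps_lt : eps < 2^-1).
Hypotheses (Delta_ge1 : 1 <= (Delta vbl)%:R :> R) (n_ge1 : 1 <= n%:R :> R).

Let b := bmax R Dom pi vbl bad.
Let N := n%:R * kappa / eps.
Let beta := (eps / (kappa * n%:R)) ^+ 10.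

Lemma N_ge8 : 8 <= N.
Proof. exact: ge8_mul_div. Qed.

Lemma ln_N_ge1 : 1 <= ln N.
Proof. by apply: ln_ge1; apply: le_trans N_ge8; lra. Qed.

Lemma betaE : beta = expR (- (10 * ln N)).
Proof.
have N_gt0 : 0 < N by apply: lt_le_trans N_ge8; lra.
rewrite expRN expRM_natl lnK ?posrE // -exprVn /beta; congr (_ ^+ _).
by rewrite /N invf_div (mulrC n%:R).
Qed.

Lemma Snat_gt : 10 * expR (eta * ln N) * ln N < (Snat n kappa eps eta)%:R + 1.
Proof.
have N_gt0 : 0 < N by apply: lt_le_trans N_ge8; lra.
have -> : 10 * expR (eta * ln N) * ln N = Spar n kappa eps eta.
  by rewrite /Spar /powR (mulrC kappa) -/N gt_eqF.
by rewrite natr1 truncnS_gt.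
Qed.

Lemma bmax_mul_Delta : b * (Delta vbl)%:R <= eta / 300.
Proof.
have := A1_eta; rewrite /A1 -/b => bA1.
have D_gt0 : 0 < (Delta vbl)%:R :> R by apply: lt_le_trans Delta_ge1; lra.
by rewrite -ler_pdivlMr // -mulrA -invfM.
Qed.

Lemma weight_le_bmax (F : 'I_n -> {set Om}) C :
  (forall u, u \in vbl C -> fibre Dom pi u (Cpi pi bad C u) \subset F u) ->
  weight R F vbl C <= b.
Proof.
move=> fibreF; apply: le_trans (le_bigmax _ _ C); rewrite /weight /bC.
apply: ler_prod => u Cu; rewrite invr_ge0 ler0n /=.
have fibre_gt0 : (0 < #|fibre Dom pi u (Cpi pi bad C u)|)%N.
  by apply/card_gt0P; exists (bad C u); rewrite /fibre inE bad_in_Dom // /Cpi eqxx.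
have fibre_le := subset_leq_card (fibreF u Cu).
by rewrite lef_pV2 ?posrE ?ltr0n ?ler_nat // (leq_trans fibre_gt0).
Qed.

Lemma attempts_fail_le_beta (F : 'I_n -> {set Om}) (S : {set 'I_m}) :
  (forall C u, C \in S -> u \in vbl C -> fibre Dom pi u (Cpi pi bad C u) \subset F u) ->
  #|S|%:R <= Lpar vbl kappa eps ->
  attempts (Snat n kappa eps eta) (unif R (prodset F)) (satC vbl bad S) None <= beta.
Proof.
move=> fibreF S_le.
have b_ge0 : 0 <= b by apply: bigmax_ge_id.
have [x0 x1 bx] := lll_weight_condition b_ge0 Delta_ge1 bmax_mul_Delta eta_lt.
have degree_le C : (#|[set C' | ~~ [disjoint vbl C & vbl C']]| <= Delta vbl)%N.
  exact: (leq_bigmax C).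
apply: le_trans (attempts_fail_le bad _ x0 x1 bx _ degree_le) _.
  by move=> C SC; apply: weight_le_bmax => u; apply: fibreF.
rewrite betaE.
exact: retry_fail_le b_ge0 Delta_ge1 bmax_mul_Delta eta_gt0 eta_lt ln_N_ge1 S_le Snat_gt.
Qed.

Lemma beta_ge0 : 0 <= beta.
Proof. by rewrite betaE expR_ge0. Qed.

Lemma subprob_Sample Y v : subprob (Sample Dom pi vbl bad kappa eps eta Y v).
Proof.
have unif_ret (T : finType) (A : {set Q}) (g : Q -> T) :
    subprob (dbind (unif R A) (fun q => dret R (g q))).
  by apply: subprob_dbind => *; [exact: subprob_unif | exact: subprob_dret].
rewrite /Sample; case: ifP => _; first exact: unif_ret.
apply: subprob_dbind; first by apply/subprob_attempts/subprob_unif.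
by case=> [X|]; [exact: subprob_dret | exact: unif_ret].
Qed.

Lemma Sample_fail_le Y v :
  dprob (Sample Dom pi vbl bad kappa eps eta Y v) (fun p => p.2) <= beta.
Proof.
rewrite /Sample; set V' := _ :\ v; set Hv := compH _ _ _ V' Y v.
set CH := CofH _ _ _ V' Y Hv; case: ifP => [_|L_ge].
  by rewrite dprob_dbind_dret /dprob big_pred0_eq beta_ge0.
apply: le_trans (dprob_dbind_option_le (c := 0) _ (lexx 0) _ _) _.
- by apply/subprob_attempts/subprob_unif.
- by rewrite dprob_dbind_dret; apply/dprob_le1/subprob_unif.
- by move=> X; rewrite dprob_dret.
rewrite addr0; apply: attempts_fail_le_beta; last by rewrite leNgt L_ge.
move=> C u /setIdP[+ sCH] Cu; rewrite inE => /forall_inP CY.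
case: eqP => [->|/eqP uv]; first by apply/subsetP => x /setIdP[].
by rewrite (subsetP sCH u Cu) (eqP (CY u _)) // !inE uv Cu.
Qed.

Lemma subprob_step Y : subprob (step Dom pi vbl bad kappa eps eta Y).
Proof.
apply: subprob_dbind => [|v]; first exact: subprob_unif.
by apply: subprob_dbind => [|p]; [exact: subprob_Sample | exact: subprob_dret].
Qed.

Lemma subprob_Ydist t : subprob (Ydist Dom pi vbl bad kappa eps eta t).
Proof.
elim: t => [|t IH] /=; first exact: subprob_unif.
apply: subprob_dbind => // Y.
by apply: subprob_dbind => [|p]; [exact: subprob_step | exact: subprob_dret].
Qed.

Lemma failS_le t : failS Dom pi vbl bad kappa eps eta t <= beta.
Proof.
apply: dprob_dbind_le_const (subprob_Ydist _) beta_ge0 _ => Y.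
apply: dprob_dbind_le_const (subprob_unif _ _) beta_ge0 _ => v.
by rewrite dprob_dbind_dret; apply: Sample_fail_le.
Qed.

Lemma inv_loop_fail_le Y l acc :
  (forall H, H \in l -> #|CofH pi vbl bad [set: 'I_n] Y H|%:R <= Lpar vbl kappa eps) ->
  dprob (inv_loop Dom pi vbl bad kappa eps eta Y l acc) (fun o => Some o == Some None)
    <= (size l)%:R * beta.
Proof.
elim: l acc => [|H l IH] acc L_ge /=; first by rewrite dprob_dret mul0r.
rewrite -natr1 mulrDl mul1r addrC.
apply: le_trans (dprob_dbind_option_le (c := (size l)%:R * beta) _ _ _ _) _.
- by apply/subprob_attempts/subprob_unif.
- by rewrite mulr_ge0 ?beta_ge0.
- by rewrite dprob_dret.
- by move=> X; apply: IH => H' lH'; apply: L_ge; rewrite inE lH' orbT.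
rewrite lerD2r; apply: attempts_fail_le_beta; last by apply: L_ge; rewrite mem_head.
move=> C u /setIdP[+ sCH] Cu; rewrite inE => /forall_inP CY.
by rewrite (subsetP sCH u Cu) (eqP (CY u _)) // !inE Cu.
Qed.

Lemma InvSample_fail_le Y :
  dprob (InvSample Dom pi vbl bad kappa eps eta Y) (fun o => o == Some None)
    <= n%:R * beta.
Proof.
rewrite /InvSample; case: ifP => [_|no_large].
  by rewrite dprob_dret mulr_ge0 ?beta_ge0.
rewrite dprob_dbind_dret; apply: le_trans (inv_loop_fail_le _ _) _.
  move=> H; rewrite mem_enum => compH.
  move/negbT: no_large; rewrite negb_exists_in => /forall_inP/(_ H compH).
  by rewrite leNgt.
rewrite ler_wpM2r ?beta_ge0 // ler_nat -cardE.
by apply: leq_trans (leq_imset_card _ _) _; rewrite cardsT card_ord.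
Qed.

Lemma failI_le C0 :
  failI Dom pi vbl bad kappa eps eta C0 <= (eps / (kappa * n%:R)) ^+ 9.
Proof.
apply: le_trans (mul_exprS_le 9 n_ge1 kappa_ge4 eps_gt0 eps_lt).
apply: dprob_dbind_le_const (subprob_Ydist _) _ InvSample_fail_le.
by rewrite mulr_ge0 ?beta_ge0.
Qed.

End Algorithm.

Theorem corollary4p8 :
  forall (R : realType) (K : R),
  exists c0 C0 : R, 1 <= c0 /\ 1 <= C0 /\
  forall (n m : nat) (Om Q : finType)
         (Dom : 'I_n -> {set Om}) (pi : 'I_n -> Om -> Q)
         (vbl : 'I_m -> {set 'I_n}) (bad : 'I_m -> 'I_n -> Om)
         (eta kappa eps : R),
    (* the CSP: nonempty domains, violating assignments inside the domains *)
    (forall v, Dom v != set0) ->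
    (forall C u, u \in vbl C -> bad C u \in Dom u) ->
    (* admissibility with parameter eta (A1)-(A3), kappa as in (A2) *)
    0 < eta < 2^-1 ->
    A1 Dom pi vbl bad eta ->
    A2 Dom pi vbl bad K kappa ->
    A3 R Dom pi vbl bad ->
    0 < eps < 2^-1 ->
    c0 <= (Delta vbl)%:R -> c0 <= n%:R ->
    (forall t : nat, (1 <= t <= Tnat vbl kappa eps C0)%N ->
       failS Dom pi vbl bad kappa eps eta t <= (eps / (kappa * n%:R)) ^+ 10)
    /\
    failI Dom pi vbl bad kappa eps eta C0 <= (eps / (kappa * n%:R)) ^+ 9.
Proof.
move=> R K; exists 1, 1; do 2!split => //.
move=> n m Om Q Dom pi vbl bad eta kappa eps _ bad_in_Dom /andP[eta_gt0 eta_lt]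
  A1_eta [kappa_ge _ _] _ /andP[eps_gt0 eps_lt] Delta_ge1 n_ge1.
have kappa_ge4 : 4 <= kappa.
  have : 1 <= ln (3 * 10 ^+ 3 * (Delta vbl)%:R : R) by apply: ln_ge1; lra.
  lra.
split=> [t _|].
  exact: failS_le bad_in_Dom eta_gt0 eta_lt A1_eta kappa_ge4 eps_gt0 eps_lt
    Delta_ge1 n_ge1 t.
exact: failI_le bad_in_Dom eta_gt0 eta_lt A1_eta kappa_ge4 eps_gt0 eps_lt
  Delta_ge1 n_ge1 1.
Qed.
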